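(* Let $S(x)=\frac12\Big(1+\frac{\sinh(2x)}{2x}-2\Big(\frac{\sinh x}{x}\Big)^2-\frac{2x^4}{45}\Big)$. Then for all $0<x\le\frac32$, $$S(x)\le\frac{x^6}{270}.$$ *)

From Stdlib Require Import Reals.
Open Scope R_scope.

Definition S (x : R) : R :=
  / 2 * (1 + sinh (2 * x) / (2 * x) - 2 * (sinh x / x) ^ 2 - 2 * x ^ 4 / 45).

From Stdlib Require Import Factorial Reals Lra Lia.
Open Scope R_scope.

(* With y = 2x one has 2x^2 S(x) = y sinh(y)/4 - cosh(y) + 1 + y^2/4 - y^6/1440,
   whose Taylor series sum_{k >= 4} (k - 2) y^(2k) / (2 (2k)!) starts at y^8/40320.
   The partial sums of the exponential series for y sinh(y)/4 - cosh(y) increase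
   by at most y^(k+1) / (4 k!) at step k, and for y <= 3 these bounds halve from
   k = 14 on.  Truncating after k = 13 and bounding the tail geometrically leaves
   a polynomial inequality on [0, 3]. *)

(* The name [S] is taken by the function of the statement. *)
Local Notation succ := Datatypes.S.

Lemma Un_cv_le_eventually (u : nat -> R) (l B : R) (N : nat) :
  Un_cv u l -> (forall n, (N <= n)%nat -> u n <= B) -> l <= B.
Proof.
  intros Hu Hle. apply Rnot_lt_le; intro HB.
  destruct (Hu (l - B)) as [M HM]; [lra|].
  specialize (HM (max N M) (Nat.le_max_r N M)).
  specialize (Hle (max N M) (Nat.le_max_l N M)).
  unfold Rdist in HM. apply Rabs_def2 in HM. lra.
Qed.

Lemma Un_cv_le_geometric_tail (u e : nat -> R) (l : R) (N : nat) :
  Un_cv u l ->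
  (forall n, u (succ n) <= u n + e (succ n)) ->
  (forall n, (N < n)%nat -> e (succ n) <= e n / 2) ->
  (forall n, 0 <= e n) ->
  l <= u N + 2 * e (succ N).
Proof.
  intros Hu Hstep Hratio He.
  assert (Hinv : forall k, u (succ N + k)%nat + e (succ N + k)%nat
                           <= u N + 2 * e (succ N)).
  { induction k as [|k IH].
    - rewrite Nat.add_0_r. specialize (Hstep N). lra.
    - rewrite Nat.add_succ_r.
      specialize (Hstep (succ N + k)%nat).
      specialize (Hratio (succ N + k)%nat ltac:(lia)). lra. }
  apply (Un_cv_le_eventually u l _ (succ N) Hu). intros n Hn.
  specialize (Hinv (n - succ N)%nat). specialize (He n).
  replace (succ N + (n - succ N))%nat with n in Hinv by lia. lra.
Qed.

Lemma Un_cv_scal (c l : R) (u : nat -> R) :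
  Un_cv u l -> Un_cv (fun n => c * u n) (c * l).
Proof. apply (continuity_seq (Rmult c)). reg. Qed.

Definition exp_partial (y : R) (n : nat) : R :=
  sum_f_R0 (fun i => / INR (fact i) * y ^ i) n.

Lemma exp_partial_cv (y : R) : Un_cv (exp_partial y) (exp y).
Proof. unfold exp; destruct (exist_exp y) as [l H]; exact H. Qed.

Definition ysinh_cosh_partial (y : R) (n : nat) : R :=
  (y / 8 - / 2) * exp_partial y n - (y / 8 + / 2) * exp_partial (- y) n.

Lemma ysinh_cosh_partial_cv (y : R) :
  Un_cv (ysinh_cosh_partial y) (y * sinh y / 4 - cosh y).
Proof.
  replace (y * sinh y / 4 - cosh y)
    with ((y / 8 - / 2) * exp y - (y / 8 + / 2) * exp (- y))
    by (unfold sinh, cosh; field).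
  apply CV_minus; apply Un_cv_scal, exp_partial_cv.
Qed.

Definition increment_bound (y : R) (k : nat) : R :=
  y ^ succ k / (4 * INR (fact k)).

Lemma increment_bound_ge0 (y : R) (k : nat) : 0 <= y -> 0 <= increment_bound y k.
Proof.
  intros Hy. unfold increment_bound.
  apply Rle_mult_inv_pos; [apply pow_le; lra|].
  pose proof (INR_fact_lt_0 k). lra.
Qed.

Lemma ysinh_cosh_partial_succ_le (y : R) (n : nat) : 0 <= y ->
  ysinh_cosh_partial y (succ n)
  <= ysinh_cosh_partial y n + increment_bound y (succ n).
Proof.
  intros Hy. unfold ysinh_cosh_partial, exp_partial, increment_bound.
  cbn [sum_f_R0].
  set (c := / INR (fact (succ n))).
  set (u := y ^ succ n). set (v := (- y) ^ succ n).
  assert (Hc : 0 < c) by apply Rinv_0_lt_compat, INR_fact_lt_0.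
  assert (Hvu : - u <= v).
  { assert (Habs : Rabs v = u)
      by (unfold u, v; rewrite <- RPow_abs, Rabs_Ropp, Rabs_pos_eq; [reflexivity | lra]).
    pose proof (Rle_abs (- v)) as Hv. rewrite Rabs_Ropp in Hv. lra. }
  assert (Hu : 0 <= u) by (apply pow_le; lra).
  change (y ^ succ (succ n)) with (y * u).
  replace (y * u / (4 * INR (fact (succ n)))) with (c * (y * u / 4))
    by (unfold c; field; apply INR_fact_neq_0).
  assert (Hgap : 0 <= c * ((y / 8 + / 2) * (u + v)))
    by (apply Rmult_le_pos; [lra | apply Rmult_le_pos; lra]).
  nra.
Qed.

Lemma increment_bound_succ (y : R) (k : nat) :
  increment_bound y (succ k) = y / INR (succ k) * increment_bound y k.
Proof.
  unfold increment_bound. rewrite fact_simpl, mult_INR.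
  change (y ^ succ (succ k)) with (y * y ^ succ k).
  field. split; [apply INR_fact_neq_0 | apply not_0_INR; lia].
Qed.

Lemma increment_bound_succ_le_half (y : R) (k : nat) :
  0 <= y -> 2 * y <= INR (succ k) ->
  increment_bound y (succ k) <= increment_bound y k / 2.
Proof.
  intros Hy Hk. rewrite increment_bound_succ.
  pose proof (increment_bound_ge0 y k Hy) as He.
  assert (Hr : 0 < INR (succ k)) by (apply lt_0_INR; lia).
  assert (Hq : y / INR (succ k) <= / 2).
  { apply (Rmult_le_reg_r (INR (succ k))); [exact Hr|].
    unfold Rdiv. rewrite Rmult_assoc, Rinv_l; lra. }
  nra.
Qed.

Lemma ysinh_cosh_le_partial (y : R) (N : nat) :
  0 <= y -> 2 * y <= INR (succ (succ N)) ->
  y * sinh y / 4 - cosh y <= ysinh_cosh_partial y N + 2 * increment_bound y (succ N).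
Proof.
  intros Hy HN.
  apply Un_cv_le_geometric_tail.
  - apply ysinh_cosh_partial_cv.
  - intro n. apply ysinh_cosh_partial_succ_le; exact Hy.
  - intros n Hn. apply increment_bound_succ_le_half; [exact Hy|].
    apply (Rle_trans _ _ _ HN), le_INR. lia.
  - intro n. apply increment_bound_ge0; exact Hy.
Qed.

Lemma ysinh_cosh_partial_13 (y : R) :
  ysinh_cosh_partial y 13 = - 1 - y ^ 2 / 4 + y ^ 6 / 1440 + y ^ 8 / 40320
    + y ^ 10 / 2419200 + y ^ 12 / 239500800 + y ^ 14 / 24908083200.
Proof.
  unfold ysinh_cosh_partial, exp_partial. cbn [sum_f_R0].
  rewrite !fact_simpl, !mult_INR. simpl INR. field.
Qed.

Lemma increment_bound_14 (y : R) : increment_bound y 14 = y ^ 15 / 348713164800.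
Proof.
  unfold increment_bound. rewrite !fact_simpl, !mult_INR. simpl INR. field.
Qed.

Definition ysinh_cosh_remainder (y : R) : R :=
  y * sinh y / 4 - cosh y + 1 + y ^ 2 / 4 - y ^ 6 / 1440.

Lemma ysinh_cosh_remainder_le (y : R) :
  0 <= y <= 3 -> ysinh_cosh_remainder y <= y ^ 8 / 34560.
Proof.
  intros Hy.
  assert (Htrunc := ysinh_cosh_le_partial y 13 (proj1 Hy) ltac:(simpl INR; lra)).
  rewrite ysinh_cosh_partial_13, increment_bound_14 in Htrunc.
  assert (Hpoly : y ^ 2 / 2419200 + y ^ 4 / 239500800 + y ^ 6 / 24908083200
                  + y ^ 7 / 174356582400 <= / 241920).
  { assert (y ^ 2 <= 3 ^ 2) by (apply pow_incr; lra).
    assert (y ^ 4 <= 3 ^ 4) by (apply pow_incr; lra).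
    assert (y ^ 6 <= 3 ^ 6) by (apply pow_incr; lra).
    assert (y ^ 7 <= 3 ^ 7) by (apply pow_incr; lra).
    simpl (3 ^ _) in *. lra. }
  assert (Hy8 : 0 <= y ^ 8) by (apply pow_le; lra).
  unfold ysinh_cosh_remainder.
  replace (y ^ 8 / 34560) with (y ^ 8 / 40320 + y ^ 8 * / 241920) by field.
  assert (Htail : y ^ 8 * (y ^ 2 / 2419200 + y ^ 4 / 239500800 + y ^ 6 / 24908083200
                  + y ^ 7 / 174356582400) <= y ^ 8 * / 241920)
    by (apply Rmult_le_compat_l; assumption).
  lra.
Qed.

Lemma S_eq_ysinh_cosh_remainder (x : R) :
  x <> 0 -> S x = ysinh_cosh_remainder (2 * x) / (2 * x ^ 2).
Proof.
  intros Hx. unfold S, ysinh_cosh_remainder, sinh, cosh.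
  rewrite !exp_Ropp.
  replace (exp (2 * x)) with (exp x * exp x) by (rewrite <- exp_plus; f_equal; ring).
  pose proof (exp_pos x).
  field. lra.
Qed.

Theorem lemma2 : forall x : R, 0 < x -> x <= 3 / 2 -> S x <= x ^ 6 / 270.
Proof.
  intros x Hx Hx32.
  rewrite S_eq_ysinh_cosh_remainder by lra.
  assert (Hx2 : 0 < 2 * x ^ 2) by (pose proof (pow_lt x 2 Hx); lra).
  apply Rle_trans with ((2 * x) ^ 8 / 34560 / (2 * x ^ 2)).
  - apply Rmult_le_compat_r.
    + left. apply Rinv_0_lt_compat, Hx2.
    + apply ysinh_cosh_remainder_le. lra.
  - right. field. lra.
Qed.
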